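(* Let $\epsilon\in(0,1]$, let $G$ be a finite group, $\alpha$ an automorphism of $G$, and $S:=\{g\in G:\alpha(g)=g^{-1}\}$. If $s,t\in S$ satisfy $|sS\cap tS|\geq\epsilon|G|$, then $|C_G(st^{-1})|\geq\epsilon|G|$, where $C_G(x)$ denotes the centralizer of $x$ in $G$.
   Context: For $s\in G$ and $S\subseteq G$, $sS=\{sx:x\in S\}$ is the left translate. *)

From HB Require Import structures.
From mathcomp Require Import all_boot all_order all_algebra all_fingroup.
Set Implicit Arguments. Unset Strict Implicit. Unset Printing Implicit Defensive.

Definition inv_set (gT : finGroupType) (G : {set gT}) (alpha : gT -> gT) : {set gT} :=
  [set g in G | alpha g == g^-1]%g.

From mathcomp Require Import all_boot all_order all_algebra all_fingroup.
Import Order.TTheory Num.Theory.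
Local Open Scope ring_scope.

(* If [s] and [s^-1 x] both lie in [S], then [alpha x = alpha s * alpha (s^-1 x)
   = s^-1 x^-1 s]; comparing the two expressions of [alpha x] coming from [s]
   and [t] shows that [x] commutes with [s t^-1].  So [sS :&: tS] lies in the
   centralizer. *)

Section InvSet.

Variables (gT : finGroupType) (G : {group gT}) (alpha : {morphism G >-> gT}).

Local Notation S := (inv_set G alpha).
Local Open Scope group_scope.

Lemma inv_set_lcoset_morph {s x : gT} :
  s \in S -> x \in s *: S -> x \in G /\ alpha x = s^-1 * x^-1 * s.
Proof.
rewrite mem_lcoset !inE => /andP[Gs /eqP alpha_s] /andP[Gsx /eqP alpha_sx].
have Gx : x \in G by rewrite -(mulKVg s x) groupM.
split=> //.
rewrite morphM ?groupV // morphV // alpha_s invgK invMg invgK in alpha_sx.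
by rewrite -mulgA -alpha_sx mulKg.
Qed.

Lemma inv_set_lcosetI_sub_cent1 (s t : gT) :
  s \in S -> t \in S -> s *: S :&: t *: S \subset 'C_G[s * t^-1].
Proof.
move=> Ss St; apply/subsetP => x /setIP[xsS xtS].
have [Gx alpha_x_s] := inv_set_lcoset_morph Ss xsS.
have [_ alpha_x_t] := inv_set_lcoset_morph St xtS.
have conj_eq : s^-1 * x * s = t^-1 * x * t.
  by apply: invg_inj; rewrite !invMg !invgK !mulgA -alpha_x_s alpha_x_t.
rewrite inE Gx; apply/cent1P.
transitivity (s * (s^-1 * x * s) * t^-1); first by rewrite !mulgA mulgV mul1g.
by rewrite conj_eq !mulgA mulgK.
Qed.

End InvSet.

Theorem lemma5 (R : realFieldType) (eps : R) (gT : finGroupType) (G : {group gT})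
  (alpha : {morphism G >-> gT}) (Halpha : isom G G alpha)
  (heps0 : 0 < eps) (heps1 : eps <= 1) (s t : gT)
  (hs : s \in inv_set G alpha) (ht : t \in inv_set G alpha)
  (hst : eps * (#|G|%:R) <= (#|((s *: inv_set G alpha) :&: (t *: inv_set G alpha))%g|%:R))
  : eps * (#|G|%:R) <= (#|('C_G[s * t^-1])%g|%:R).
Proof.
apply: (le_trans hst); rewrite ler_nat.
exact/subset_leq_card/inv_set_lcosetI_sub_cent1.
Qed.
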